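(* For a graph $G=(V,E)$ and $\tau\ge1$, let $Q_{\mathrm{LP\text{-}Del\text{-}N}}(G,\tau)$ be the optimal value of the linear program $$\max\ -\sum_{v\in V}x_v\quad\text{s.t.}\quad y_e\ge1-x_{v'}-x_{v''}\ \ \forall e=(v',v'')\in E,\qquad \sum_{e\in E(v)}y_e\le\tau\ \ \forall v\in V,\qquad x_v,y_e\in[0,1].$$ Then: (1) for fixed $G$, $Q_{\mathrm{LP\text{-}Del\text{-}N}}(G,\tau)$ is non-decreasing in $\tau$ and equals $0$ for $\tau\ge\deg(G)$; (2) for any node-neighboring graphs $G,G'$, $|Q_{\mathrm{LP\text{-}Del\text{-}N}}(G,\tau)-Q_{\mathrm{LP\text{-}Del\text{-}N}}(G',\tau)|\le1$; (3) for node-neighboring $G,G'$ with $G\subseteq G'$, $Q_{\mathrm{LP\text{-}Del\text{-}N}}(G,\tau)\ge Q_{\mathrm{LP\text{-}Del\text{-}N}}(G',\tau)$.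
   Context: Graphs are finite, simple, undirected; $E(v)$ is the set of edges incident to $v$ and $\deg(G)$ is the maximum degree. $G\subseteq G'$ means $G$ is obtained from $G'$ by deleting a set of nodes with all incident edges; $G,G'$ are node-neighboring if one is obtained from the other by deleting a single node with its incident edges. *)

From mathcomp Require Import all_boot all_order all_algebra.
From mathcomp Require Import classical_sets reals.
Set Implicit Arguments. Unset Strict Implicit. Unset Printing Implicit Defensive.
Import Order.TTheory GRing.Theory Num.Theory.
Local Open Scope ring_scope.

(* A finite simple graph is represented as the subgraph induced by a vertex
   set V : {set T} in a host graph given by a symmetric irreflexive relation
   e on a finite type T.  Deleting nodes (with incident edges) = shrinking V. *)

Definition edges (T : finType) (e : rel T) (V : {set T}) : {set {set T}} :=
  [set [set u; v] | u in V, v in V & e u v].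

(* deg(G): maximum degree (0 for the empty graph) *)
Definition max_deg (T : finType) (e : rel T) (V : {set T}) : nat :=
  \max_(v in V) #|[set u in V | e v u]|.

Definition LP_Del_N_feasible (R : realType) (T : finType) (e : rel T)
    (V : {set T}) (tau : R) (x : T -> R) (y : {set T} -> R) : Prop :=
  [/\ (forall u v, u \in V -> v \in V -> e u v -> 1 - x u - x v <= y [set u; v]),
      (forall v, v \in V -> \sum_(ed in edges e V | v \in ed) y ed <= tau),
      (forall v, v \in V -> 0 <= x v <= 1) &
      (forall ed, ed \in edges e V -> 0 <= y ed <= 1)].

Definition Q_LP_Del_N (R : realType) (T : finType) (e : rel T)
    (V : {set T}) (tau : R) : R :=
  sup [set r : R | exists x y, LP_Del_N_feasible e V tau x y /\
                               r = - \sum_(v in V) x v].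

Definition node_neighboring (T : finType) (V V' : {set T}) : Prop :=
  exists v, (v \notin V /\ V' = v |: V) \/ (v \notin V' /\ V = v |: V').

From mathcomp Require Import all_boot all_order all_algebra.
From mathcomp Require Import classical_sets reals.
From mathcomp Require Import lra.
Import Order.TTheory GRing.Theory Num.Theory.
Local Open Scope ring_scope.

(* Every bound on the optimal value comes from transporting feasible
   solutions.  Raising tau keeps a solution feasible; deleting nodes keeps
   the restriction feasible and can only lower the cost sum_v x_v; adding a
   node v stays feasible by putting v in the deletion set (x_v = 1) and
   dropping its edges (y_e = 0), which raises the cost by exactly 1.  When
   tau >= deg(G), keeping every edge (x = 0, y = 1) is feasible at cost 0,
   and 0 is always an upper bound. *)

Lemma ler_sum_subpred (R : numDomainType) (I : finType) (P Q : pred I)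
    (F : I -> R) :
  subpred P Q -> (forall i, Q i -> 0 <= F i) ->
  \sum_(i | P i) F i <= \sum_(i | Q i) F i.
Proof.
move=> sPQ F_ge0; rewrite big_mkcond [leRHS]big_mkcond; apply: ler_sum => i _.
by case: (boolP (P i)) => [/sPQ -> // | _]; case: ifP => // /F_ge0.
Qed.

Section LPDelN.

Set Implicit Arguments.
Unset Strict Implicit.

Variables (R : realType) (T : finType) (e : rel T).

Lemma edgesP (V : {set T}) ed :
  reflect (exists u w, [/\ u \in V, w \in V, e u w & ed = [set u; w]])
          (ed \in edges e V).
Proof.
apply: (iffP imset2P).
- by move=> [u w uV]; rewrite inE => /andP[wV euw] ->; exists u, w.
- case=> u [w [uV wV euw ->]]; exists u w => //; by rewrite inE wV.
Qed.

Lemma edgesS (V V' : {set T}) : V \subset V' -> edges e V \subset edges e V'.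
Proof.
move=> sVV'; apply/fintype.subsetP => _ /edgesP[u [w [uV wV euw ->]]].
by apply/edgesP; exists u, w; rewrite !(fintype.subsetP sVV').
Qed.

Lemma edges_setU1 (V : {set T}) v ed :
  ed \in edges e (v |: V) -> v \notin ed -> ed \in edges e V.
Proof.
case/edgesP=> u [w [uV wV euw ->]]; rewrite !inE negb_or => /andP[vu vw].
move: uV wV; rewrite !inE eq_sym (negbTE vu) eq_sym (negbTE vw) => uV wV.
by apply/edgesP; exists u, w.
Qed.

Lemma card_edges_at_le_max_deg (esym : symmetric e) (V : {set T}) w :
  w \in V -> (#|[set ed in edges e V | w \in ed]| <= max_deg e V)%N.
Proof.
move=> wV; apply: (@leq_trans #|[set u in V | e w u]|); last first.
  exact: (@leq_bigmax_cond _ (mem V) (fun v => #|[set u in V | e v u]|) _ wV).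
apply: (leq_trans _ (leq_imset_card (fun u => [set w; u]) _)).
apply/subset_leq_card/fintype.subsetP => ed; rewrite inE => /andP[].
case/edgesP=> a [b [aV bV eab ->]]; rewrite !inE => /orP[]/eqP wE; subst w.
  by apply/imsetP; exists b; rewrite // inE bV eab.
by apply/imsetP; exists a; [rewrite inE aV esym eab | rewrite finset.setUC].
Qed.

Definition LP_Del_N_values (V : {set T}) (tau : R) : set R :=
  [set r | exists x y, LP_Del_N_feasible e V tau x y /\
                       r = - \sum_(v in V) x v].

Lemma LP_Del_N_values_le0 (V : {set T}) (tau : R) :
  ubound (LP_Del_N_values V tau) 0.
Proof.
move=> _ [x [y [[_ _ x01 _] ->]]]; rewrite oppr_le0.
by apply: sumr_ge0 => v /x01 /andP[].
Qed.

Lemma LP_Del_N_feasible_delete_all (V : {set T}) (tau : R) :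
  0 <= tau -> LP_Del_N_feasible e V tau (fun=> 1) (fun=> 0).
Proof.
move=> tau_ge0; split => [u w _ _ _|v _|v _|ed _].
- by rewrite !subrr sub0r lerN10.
- by rewrite big1.
- by rewrite lexx ler01.
- by rewrite lexx ler01.
Qed.

Lemma LP_Del_N_values_neq0 (V : {set T}) (tau : R) :
  0 <= tau -> (LP_Del_N_values V tau !=set0)%classic.
Proof.
move=> tau_ge0; exists (- \sum_(v in V) 1), (fun=> 1), (fun=> 0).
by split; last by []; exact: LP_Del_N_feasible_delete_all.
Qed.

Lemma Q_LP_Del_N_le0 (V : {set T}) (tau : R) :
  0 <= tau -> Q_LP_Del_N e V tau <= 0.
Proof.
by move=> tau_ge0; apply: ge_sup; [exact: LP_Del_N_values_neq0 |
                                   exact: LP_Del_N_values_le0].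
Qed.

Lemma Q_LP_Del_N_le_transport (V V' : {set T}) (tau tau' c : R) :
  0 <= tau ->
  (forall x y, LP_Del_N_feasible e V tau x y ->
     exists x' y', LP_Del_N_feasible e V' tau' x' y' /\
       - \sum_(v in V) x v <= - \sum_(v in V') x' v + c) ->
  Q_LP_Del_N e V tau <= Q_LP_Del_N e V' tau' + c.
Proof.
move=> tau_ge0 transport; apply: ge_sup; first exact: LP_Del_N_values_neq0.
move=> _ [x [y [/transport [x' [y' [feas' le_cost]]] ->]]].
apply: (le_trans le_cost); rewrite lerD2r; apply: ub_le_sup.
  by exists 0; exact: LP_Del_N_values_le0.
by exists x', y'.
Qed.

Lemma LP_Del_N_feasible_le_tau (V : {set T}) (tau1 tau2 : R) x y :
  tau1 <= tau2 -> LP_Del_N_feasible e V tau1 x y ->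
  LP_Del_N_feasible e V tau2 x y.
Proof.
by move=> le_tau [cover load x01 y01]; split => // v /load /le_trans; apply.
Qed.

Lemma Q_LP_Del_N_le_tau (V : {set T}) (tau1 tau2 : R) :
  0 <= tau1 -> tau1 <= tau2 -> Q_LP_Del_N e V tau1 <= Q_LP_Del_N e V tau2.
Proof.
move=> tau1_ge0 le_tau; rewrite -[leRHS]addr0.
apply: Q_LP_Del_N_le_transport => // x y feas; exists x, y.
by rewrite addr0; split; first exact: LP_Del_N_feasible_le_tau feas.
Qed.

Lemma LP_Del_N_feasible_subset (V V' : {set T}) (tau : R) x y :
  V \subset V' -> LP_Del_N_feasible e V' tau x y ->
  LP_Del_N_feasible e V tau x y.
Proof.
move=> sVV' [cover load x01 y01]; have sE := edgesS sVV'.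
split => [u w uV wV|v vV|v vV|ed Ed].
- by apply: cover; exact: (fintype.subsetP sVV').
- apply: le_trans (load v (fintype.subsetP sVV' v vV)).
  apply: ler_sum_subpred => [ed /andP[Ed ->]|ed /andP[/y01 /andP[]//]].
  by rewrite (fintype.subsetP sE).
- exact/x01/(fintype.subsetP sVV').
- exact/y01/(fintype.subsetP sE).
Qed.

Lemma Q_LP_Del_N_subset (V V' : {set T}) (tau : R) :
  0 <= tau -> V \subset V' -> Q_LP_Del_N e V' tau <= Q_LP_Del_N e V tau.
Proof.
move=> tau_ge0 sVV'; rewrite -[leRHS]addr0.
apply: Q_LP_Del_N_le_transport => // x y feas; exists x, y; split.
  exact: LP_Del_N_feasible_subset feas.
rewrite addr0 lerN2; apply: ler_sum_subpred => [v /(fintype.subsetP sVV') //|v].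
by case: feas => _ _ x01 _ /x01 /andP[].
Qed.

Lemma LP_Del_N_feasible_setU1 (eirr : irreflexive e) (V : {set T}) v
    (tau : R) x y :
  0 <= tau -> v \notin V -> LP_Del_N_feasible e V tau x y ->
  LP_Del_N_feasible e (v |: V) tau
    (fun u => if u == v then 1 else x u)
    (fun ed => if v \in ed then 0 else y ed).
Proof.
move=> tau_ge0 vV [cover load x01 y01].
split => [u w|w|u|ed Ed].
- rewrite !inE; have [->|uv] := eqVneq u v => [_|/= uV].
    have [->|wv /= wV _] := eqVneq w v; first by rewrite eirr.
    by rewrite subrr sub0r oppr_le0; case/andP: (x01 w wV).
  have [->|wv /= wV] := eqVneq w v => [_ _|].
    by rewrite addrAC subrr sub0r oppr_le0; case/andP: (x01 u uV).
  exact: cover.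
- rewrite !inE; have [->|wv /= wV] := eqVneq w v => [_|].
    by rewrite big1 // => ed /andP[_ ->].
  apply: le_trans (load w wV); rewrite big_mkcond [leRHS]big_mkcond /=.
  apply: ler_sum => ed _.
  have rhs_ge0 : 0 <= (if (ed \in edges e V) && (w \in ed) then y ed else 0).
    by case: ifP => // /andP[Ed _]; case/andP: (y01 _ Ed).
  case: (boolP (v \in ed)) => [_|vNed]; first by rewrite if_same.
  case: ifP => [/andP[Ed wed]|_] //; by rewrite (edges_setU1 Ed vNed) wed.
- rewrite !inE; case: eqP => [_ _|_ /= uV]; first by rewrite lexx ler01.
  exact: x01.
- case: ifP => [_|vNed]; first by rewrite lexx ler01.
  by apply/y01/(edges_setU1 Ed); rewrite vNed.
Qed.

Lemma Q_LP_Del_N_setU1 (eirr : irreflexive e) (V : {set T}) v (tau : R) :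
  0 <= tau -> v \notin V ->
  Q_LP_Del_N e V tau <= Q_LP_Del_N e (v |: V) tau + 1.
Proof.
move=> tau_ge0 vV; apply: Q_LP_Del_N_le_transport => // x y feas.
eexists; eexists; split; first exact: LP_Del_N_feasible_setU1 feas.
rewrite big_setU1 //= eqxx opprD addrAC addNr add0r lerN2 (eq_bigr x) // => u uV.
by case: eqP => // uv; rewrite -uv uV in vV.
Qed.

Lemma Q_LP_Del_N_max_deg (esym : symmetric e) (V : {set T}) (tau : R) :
  0 <= tau -> (max_deg e V)%:R <= tau -> Q_LP_Del_N e V tau = 0.
Proof.
move=> tau_ge0 deg_le; apply/le_anti; rewrite Q_LP_Del_N_le0 //=.
apply: ub_le_sup; first by exists 0; exact: LP_Del_N_values_le0.
exists (fun=> 0), (fun=> 1); split; last by rewrite big1 // oppr0.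
split => [u w _ _ _|w wV|v _|ed _].
- by rewrite !subr0.
- apply: le_trans deg_le; rewrite -[leLHS]/(\sum_(ed in _ | _) 1%:R) -natr_sum.
  by rewrite ler_nat sum1dep_card; exact: card_edges_at_le_max_deg.
- by rewrite lexx ler01.
- by rewrite lexx ler01.
Qed.

Lemma dist_Q_LP_Del_N_setU1 (eirr : irreflexive e) (V : {set T}) v (tau : R) :
  0 <= tau -> v \notin V ->
  `|Q_LP_Del_N e V tau - Q_LP_Del_N e (v |: V) tau| <= 1.
Proof.
move=> tau_ge0 vV; have := Q_LP_Del_N_setU1 eirr tau_ge0 vV.
have := Q_LP_Del_N_subset tau_ge0 (finset.subsetUr [set v] V).
by rewrite ler_norml => ? ?; apply/andP; split; lra.
Qed.

End LPDelN.

Theorem mainTheorem6 (R : realType) (T : finType) (e : rel T)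
    (esym : symmetric e) (eirr : irreflexive e) :
  (* (1) monotone in tau, and zero once tau >= deg(G) *)
  (forall (V : {set T}) (tau1 tau2 : R), 1 <= tau1 -> tau1 <= tau2 ->
      Q_LP_Del_N e V tau1 <= Q_LP_Del_N e V tau2) /\
  (forall (V : {set T}) (tau : R), 1 <= tau -> (max_deg e V)%:R <= tau ->
      Q_LP_Del_N e V tau = 0) /\
  (* (2) sensitivity at most 1 under node-neighboring graphs *)
  (forall (V V' : {set T}) (tau : R), 1 <= tau -> node_neighboring V V' ->
      `|Q_LP_Del_N e V tau - Q_LP_Del_N e V' tau| <= 1) /\
  (* (3) monotone under deleting a node *)
  (forall (V V' : {set T}) (tau : R), 1 <= tau -> node_neighboring V V' ->
      V \subset V' -> Q_LP_Del_N e V' tau <= Q_LP_Del_N e V tau).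
Proof.
have ge0 (tau : R) : 1 <= tau -> 0 <= tau by apply: le_trans ler01.
split; [|split; [|split]].
- by move=> V tau1 tau2 /ge0; exact: Q_LP_Del_N_le_tau.
- by move=> V tau /ge0; exact: Q_LP_Del_N_max_deg.
- move=> V V' tau /ge0 tau_ge0 [v [[vV ->]|[vV' ->]]].
    exact: dist_Q_LP_Del_N_setU1.
  by rewrite distrC; exact: dist_Q_LP_Del_N_setU1.
- by move=> V V' tau /ge0 tau_ge0 _; exact: Q_LP_Del_N_subset.
Qed.
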